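(* Let $A_1,\ldots,A_d$ be Hermitian $n\times n$ matrices and let $M_H\subset\mathbb C^{n}_z\times\mathbb C^{d}_w$ be the model quadric $$M_H=\{(z,w)\in\mathbb C^n\times\mathbb C^d:\ \Re e\, w_j={}^t\bar z A_j z,\ j=1,\ldots,d\}.$$ Then $M_H$ is of finite type at $0$ with Segre number $2$ at $0$ if and only if there exists $V\in\mathbb C^n$ such that the $n\times d$ matrix whose $j$-th column is $A_jV$ has rank $d$.
   Context: Segre sets (Baouendi–Ebenfelt–Rothschild) of a real-analytic generic submanifold $M\subset\mathbb C^N$ at $p\in M$: for $q$ near $p$ let $Q_q$ be the Segre variety of $q$ (obtained by complexifying the defining equations of $M$ and fixing the conjugate variables at $\bar q$); for $M_H$ this is $Q_{(z',w')}=\{(z,w): w_j=-\overline{w'_j}+2\,{}^t\overline{z'}A_jz,\ j=1,\dots,d\}$. Set $S_0(p)=\{p\}$ and $S_{k+1}(p)=\bigcup_{q\in S_k(p)}Q_q$; $S_k(p)$ is the image of a holomorphic Segre map $v^k$ defined on an open set of $\mathbb C^{nk}$ (here $n=\dim_{\mathbb C}$ of the CR tangent space), and $d_k(p)$ denotes the generic rank of $v^k$. $M$ is of finite type at $p$ iff $d_k(p)=N$ for some $k$, and the Segre number of $M$ at $p$ is the smallest such $k$. Here $N=n+d$. *)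

From HB Require Import structures.
From mathcomp Require Import all_boot all_order all_algebra.
From mathcomp Require Import complex.
From mathcomp Require Import all_classical all_reals all_analysis.
Set Implicit Arguments. Unset Strict Implicit. Unset Printing Implicit Defensive.
Import Order.TTheory GRing.Theory Num.Theory.
Import numFieldNormedType.Exports.
Local Open Scope ring_scope.

(* The complex numbers: [R[i]] for [R : realType], packaged as an (opaque-structure)
   numClosedFieldType so that mathcomp-analysis' topology/normed structures on
   numFieldTypes (and on matrices over them) apply to it. *)
Definition Cx (R : realType) : numClosedFieldType := R[i].

Section Segre.
Variables (R : realType) (n d : nat) (A : 'I_d -> 'M[Cx R]_n).
Local Notation C := (Cx R).

Definition conjv m (v : 'rV[C]_m) : 'rV[C]_m := map_mx (fun x : C => x^*) v.

Definition model_quadric : set ('rV[C]_n * 'rV[C]_d) :=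
  [set p : 'rV[C]_n * 'rV[C]_d | forall j : 'I_d,
     'Re (p.2 0 j) = 'Re ((conjv p.1 *m A j *m p.1^T) 0 0)].

Definition segre_variety (q : 'rV[C]_n * 'rV[C]_d) : set ('rV[C]_n * 'rV[C]_d) :=
  [set p : 'rV[C]_n * 'rV[C]_d | p.2 = \row_j (- (q.2 0 j)^* + 2 * (conjv q.1 *m A j *m p.1^T) 0 0)].

(* Holomorphic defining function Q(z, chi, tau) of the Segre varieties:
   Q_q = {w = Q(z, conj z', conj w')}. *)
Definition segreQ (z : 'rV[C]_n) (chi : 'rV[C]_n) (tau : 'rV[C]_d) : 'rV[C]_d :=
  \row_j (- tau 0 j + 2 * (chi *m A j *m z^T) 0 0).

(* Segre maps at p = 0 (Baouendi-Ebenfelt-Rothschild):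
   v^0 = p = 0,
   v^(k+1)(t^1,...,t^(k+1)) = (t^(k+1), Q(t^(k+1), \bar v^k(t^1,...,t^k))),
   where \bar v^k(t) = conj (v^k (conj t)).
   The list below is given most recent parameter first: [:: t^k; ...; t^1]. *)
Fixpoint segre_aux (fuel : nat) (ts : seq 'rV[C]_n) : 'rV[C]_n * 'rV[C]_d :=
  match fuel, ts with
  | fuel'.+1, t :: ts' =>
      let q := segre_aux fuel' (map (@conjv n) ts') in
      (t, segreQ t (conjv q.1) (conjv q.2))
  | _, _ => (0, 0)
  end.

Definition segre_seq (ts : seq 'rV[C]_n) : 'rV[C]_n * 'rV[C]_d :=
  segre_aux (size ts) ts.

(* v^k as a map C^{nk} -> C^N, N = n + d; row i of T is the parameter t^(i+1). *)
Definition segre_map (k : nat) (T : 'M[C]_(k, n)) : 'rV[C]_(n + d) :=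
  let p := segre_seq (rev [seq row i T | i <- enum 'I_k]) in row_mx p.1 p.2.

Definition segre_jac_rank (k : nat) (T : 'M[C]_(k, n)) : nat :=
  \rank (lin_mx ('d (@segre_map k) T)).

(* d_k(0) = r : the generic rank of v^k (the maximal rank of its Jacobian) is r *)
Definition segre_generic_rank_is (k r : nat) : Prop :=
  (exists T : 'M[C]_(k, n), segre_jac_rank T = r) /\
  (forall T : 'M[C]_(k, n), (segre_jac_rank T <= r)%N).

Definition finite_type_at0 : Prop :=
  exists k, segre_generic_rank_is k (n + d).

Definition segre_number_at0 (m : nat) : Prop :=
  segre_generic_rank_is m (n + d) /\
  (forall k, (k < m)%N -> ~ segre_generic_rank_is k (n + d)).

End Segre.

From HB Require Import structures.
From mathcomp Require Import all_boot all_order all_algebra.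
From mathcomp Require Import complex.
From mathcomp Require Import all_classical all_reals all_analysis.
From mathcomp Require Import zify.
Set Implicit Arguments. Unset Strict Implicit. Unset Printing Implicit Defensive.
Import Order.TTheory GRing.Theory Num.Theory.
Import numFieldNormedType.Exports.
Local Open Scope ring_scope.

(* The Segre maps of M_H at 0 are v^0 = 0, v^1(t) = (t, 0) and
   v^2(t^1, t^2) = (t^2, 2 (t^1 A_j t^2)_j), so for d > 0 only v^2 can reach
   rank n + d.  The differential of v^2 at (t^1, t^2) sends (h^1, h^2) to
   (h^2, 2 (h^1 A_j t^2 + t^1 A_j h^2)_j).  If it is onto, the directions with
   h^2 = 0 show that h^1 |-> (h^1 A_j t^2)_j is onto, i.e. the columns A_j t^2
   have rank d; conversely, if the columns A_j V have rank d, the differential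
   at (0, V) is onto. *)

Lemma row_full_lin_mxP (K : fieldType) m1 n1 m2 n2
    (f : {linear 'M[K]_(m1, n1) -> 'M[K]_(m2, n2)}) :
  row_full (lin_mx f) <-> forall Y, exists X, f X = Y.
Proof.
split=> [/row_fullP[B BK] Y | f_onto].
  exists (vec_mx (mxvec Y *m B)); apply: (can_inj mxvecK).
  by rewrite -mul_vec_lin vec_mxK -mulmxA BK mulmx1.
rewrite -sub1mx; apply/row_subP => i.
have [X fX] := f_onto (vec_mx (row i 1%:M)).
by apply/submxP; exists (mxvec X); rewrite mul_vec_lin fX vec_mxK.
Qed.

Lemma row0_col_mx (K : Type) p (u v : 'rV[K]_p) : row 0 (col_mx u v) = u.
Proof.
by apply/matrixP => i k; rewrite !mxE; case: splitP => j; rewrite !ord1.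
Qed.

Lemma row1_col_mx (K : Type) p (u v : 'rV[K]_p) : row 1 (col_mx u v) = v.
Proof.
by apply/matrixP => i k; rewrite !mxE; case: splitP => j; rewrite !ord1.
Qed.

Section Differentials.
Variables (K : numFieldType) (V : normedModType K).

Lemma is_diff_sum (W : normedModType K) (I : Type) (s : seq I)
    (f df : I -> V -> W) (x : V) :
  (forall i, is_diff x (f i) (df i)) ->
  is_diff x (fun y => \sum_(i <- s) f i y) (fun h => \sum_(i <- s) df i h).
Proof.
move=> fdf; elim: s => [|i s IHs].
  under eq_fun do rewrite big_nil; under [X in is_diff _ _ X]eq_fun do rewrite big_nil.
  exact: is_diff_cst.
under eq_fun do rewrite big_cons; under [X in is_diff _ _ X]eq_fun do rewrite big_cons.
exact: is_diffD.
Qed.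

Lemma is_diffZl (W : normedModType K) (k dk : V -> K) (w : W) (x : V) :
  is_diff x k dk -> is_diff x (fun y => k y *: w) (fun h => dk h *: w).
Proof.
move=> kdk; apply: DiffDef; first exact: differentiableZl.
by rewrite diffZl // diff_val.
Qed.

Lemma is_diff_rowP m (f df : V -> 'rV[K]_m) (x : V) :
  (forall j, is_diff x (fun y => f y 0 j) (fun h => df h 0 j)) -> is_diff x f df.
Proof.
move=> fdf; have rowE (g : V -> 'rV[K]_m) : g = fun y => \sum_j g y 0 j *: delta_mx 0 j.
  by apply/funext => y; rewrite [LHS]row_sum_delta.
by rewrite (rowE f) (rowE df); apply: is_diff_sum => j; apply: is_diffZl.
Qed.

End Differentials.

Section MatrixDifferentials.
Variables (K : numFieldType) (m p : nat).

Lemma is_diff_coord (M : 'M[K]_(m, p)) i j :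
  is_diff M (fun N : 'M[K]_(m, p) => N i j) (fun N : 'M[K]_(m, p) => N i j).
Proof.
have coord_lin : linear (fun N : 'M[K]_(m, p) => N i j) by move=> a N1 N2; rewrite !mxE.
pose coord : {linear 'M[K]_(m, p) -> K} :=
  HB.pack (fun N : 'M[K]_(m, p) => N i j) (GRing.isLinear.Build _ _ _ _ _ coord_lin).
apply: DiffDef; first exact: differentiable_coord.
by rewrite (diff_lin (f := coord)) //; exact: coord_continuous.
Qed.

Lemma is_diff_row_form (B : 'M[K]_p) (i k : 'I_m) (M : 'M[K]_(m, p)) :
  is_diff M (fun N => (row i N *m B *m (row k N)^T) 0 0)
    (fun H => (row i H *m B *m (row k M)^T) 0 0 + (row i M *m B *m (row k H)^T) 0 0).
Proof.
have formE (N1 N2 : 'M[K]_(m, p)) :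
    (row i N1 *m B *m (row k N2)^T) 0 0 = \sum_a \sum_b B a b *: (N1 i a * N2 k b).
  rewrite mxE; under eq_bigr do rewrite !mxE big_distrl.
  rewrite exchange_big /=; apply: eq_bigr => a _; apply: eq_bigr => b _.
  by rewrite !mxE -[_ *: _]/(B a b * _) mulrCA mulrA.
under eq_fun do rewrite formE.
apply: is_diff_eq.
  apply: is_diff_sum => a; apply: is_diff_sum => b; apply: is_diffZ.
  exact: is_diffM (is_diff_coord M i a) (is_diff_coord M k b).
apply/funext => H /=; rewrite !formE -big_split; apply: eq_bigr => a _.
rewrite -big_split; apply: eq_bigr => b _ /=.
by rewrite -scalerDr !fctE addrC [H i a * _]mulrC.
Qed.

End MatrixDifferentials.

Section ModelQuadric.
Variables (R : realType) (n d : nat) (A : 'I_d -> 'M[Cx R]_n).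
Local Notation C := (Cx R).

Definition Acol_mx (V : 'cV[C]_n) : 'M[C]_(n, d) := \matrix_(i, j) (A j *m V) i 0.

Lemma conjvK m (v : 'rV[C]_m) : conjv (conjv v) = v.
Proof. by apply/rowP => j; rewrite !mxE conjCK. Qed.

Lemma conjv0 m : conjv (0 : 'rV[C]_m) = 0.
Proof. by apply/rowP => j; rewrite !mxE conjC0. Qed.

Lemma Acol_mx0 : Acol_mx 0 = 0.
Proof. by apply/matrixP => i j; rewrite !mxE big1 // => k _; rewrite mxE mulr0. Qed.

Lemma mul_Acol_mx (u v : 'rV[C]_n) :
  u *m Acol_mx v^T = \row_j (u *m A j *m v^T) 0 0.
Proof.
by apply/rowP => j; rewrite mxE -mulmxA !mxE; apply: eq_bigr => i _; rewrite !mxE.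
Qed.

Lemma segre_map2E (T : 'M[C]_(2, n)) :
  segre_map A T = row_mx (row 1 T) (2 *: (row 0 T *m Acol_mx (row 1 T)^T)).
Proof.
have rowsT : [seq row i T | i <- enum 'I_2] = [:: row 0 T; row 1 T].
  by rewrite enum_ordSl enum_ordSl enum_ord0 /=; congr [:: row _ T; row _ T]; apply/val_inj.
rewrite /segre_map /segre_seq rowsT /=; congr row_mx; apply/rowP => j.
rewrite mul_Acol_mx [LHS]mxE [RHS]mxE mxE conjvK !conjv0.
have -> : segreQ A (conjv (row 0 T)) 0 0 = 0.
  by apply/rowP => k; rewrite [LHS]mxE !mul0mx !mxE oppr0 add0r mulr0.
by rewrite conjv0 mxE oppr0 add0r.
Qed.

Lemma is_diff_segre_map2 (T : 'M[C]_(2, n)) :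
  is_diff T (@segre_map _ _ _ A 2) (fun H => row_mx (row 1 H)
    (2 *: (row 0 H *m Acol_mx (row 1 T)^T + row 0 T *m Acol_mx (row 1 H)^T))).
Proof.
rewrite (funext segre_map2E); apply: is_diff_rowP => j.
rewrite -(fintype.splitK j); case: (fintype.split j) => [b|c] /=.
  under eq_fun do rewrite row_mxEl mxE.
  under [X in is_diff _ _ X]eq_fun do rewrite row_mxEl mxE.
  exact: is_diff_coord.
under eq_fun do rewrite row_mxEr mul_Acol_mx mxE mxE.
apply: is_diff_eq (is_diffZ 2 (is_diff_row_form (A c) 0 1 T)) _.
by apply/funext => H; rewrite row_mxEr !mul_Acol_mx !fctE !mxE.
Qed.

Lemma diff_segre_map2 (T H : 'M[C]_(2, n)) :
  'd (@segre_map _ _ _ A 2) T H = row_mx (row 1 H)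
    (2 *: (row 0 H *m Acol_mx (row 1 T)^T + row 0 T *m Acol_mx (row 1 H)^T)).
Proof. by rewrite (@diff_val _ _ _ _ _ _ _ (is_diff_segre_map2 T)). Qed.

Lemma segre_jac_rank_leq_row k (T : 'M[C]_(k, n)) : (segre_jac_rank A T <= k * n)%N.
Proof. exact: rank_leq_row. Qed.

Lemma segre_jac_rank_leq_col k (T : 'M[C]_(k, n)) : (segre_jac_rank A T <= n + d)%N.
Proof. by rewrite -[(n + d)%N]mul1n; exact: rank_leq_col. Qed.

Lemma segre_jac_rank_fullP k (T : 'M[C]_(k, n)) :
  segre_jac_rank A T = (n + d)%N <-> forall w, exists H, 'd (@segre_map _ _ _ A k) T H = w.
Proof.
rewrite -row_full_lin_mxP /row_full /segre_jac_rank.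
by split=> [-> | /eqP ->]; rewrite mul1n.
Qed.

Lemma segre_generic_rank_fullP k :
  segre_generic_rank_is A k (n + d) <->
  exists T : 'M[C]_(k, n), segre_jac_rank A T = (n + d)%N.
Proof.
split=> [[] // | [T rkT]].
by split=> [|T']; [exists T | exact: segre_jac_rank_leq_col].
Qed.

Lemma segre_generic_rank_lt2 k :
  (0 < d)%N -> (k < 2)%N -> ~ segre_generic_rank_is A k (n + d).
Proof.
move=> d_gt0 k_lt2 /segre_generic_rank_fullP[T rkT].
by have := segre_jac_rank_leq_row T; rewrite rkT; nia.
Qed.

Lemma rank_Acol_mx_row1 (T : 'M[C]_(2, n)) :
  segre_jac_rank A T = (n + d)%N -> \rank (Acol_mx (row 1 T)^T) = d.
Proof.
move=> /segre_jac_rank_fullP dv_onto; apply/eqP; rewrite -[_ == _]sub1mx.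
apply/row_subP => j; have [H] := dv_onto (row_mx 0 (row j 1%:M)).
rewrite diff_segre_map2 => /eq_row_mx[-> <-].
by rewrite trmx0 Acol_mx0 mulmx0 addr0 scalemxAl submxMl.
Qed.

Lemma segre_jac_rank_col_mx0 (V : 'cV[C]_n) :
  \rank (Acol_mx V) = d ->
  segre_jac_rank A (col_mx (0 : 'rV_n) V^T : 'M[C]_(2, n)) = (n + d)%N.
Proof.
move=> /eqP /row_fullP[B BK]; apply/segre_jac_rank_fullP => w.
exists (col_mx (2^-1 *: (rsubmx w *m B)) (lsubmx w)).
rewrite diff_segre_map2 !row0_col_mx !row1_col_mx trmxK mul0mx addr0.
by rewrite -scalemxAl -mulmxA BK mulmx1 scalerA divff ?scale1r ?hsubmxK.
Qed.

End ModelQuadric.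

Unset Implicit Arguments.
Theorem lemma1p2 (R : realType) (n d : nat) (A : 'I_d -> 'M[Cx R]_n)
  (hd : (0 < d)%N)
  (hA : forall j : 'I_d, (A j)^T = map_mx (fun x : Cx R => x^*) (A j)) :
  (finite_type_at0 A /\ segre_number_at0 A 2) <->
  (exists V : 'cV[Cx R]_n,
     \rank (\matrix_(i < n, j < d) (A j *m V) i 0) = d).
Proof.
split=> [[_ [/segre_generic_rank_fullP[T /rank_Acol_mx_row1 rkT] _]] | [V rkV]].
  by exists (row 1 T)^T.
have rank2 : segre_generic_rank_is A 2 (n + d).
  apply/segre_generic_rank_fullP; exists (col_mx (0 : 'rV_n) V^T).
  exact: segre_jac_rank_col_mx0.
split; first by exists 2%N.
by split=> // k; apply: segre_generic_rank_lt2.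
Qed.
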